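(* Let $\ell\in\{1,2\}$ and let ${\cal H}\subset{\cal H}_0$, $a_\ell$, $C_{{\rm G1},\ell}$, $C_{{\rm G2},\ell}$, ${\mathcal A}_\ell$ be as in the context (the standing assumptions there hold), and let $0<C_{{\rm qo},\ell}<\infty$. Let $({\cal H}_N)_{N=0}^\infty$ be a sequence of finite-dimensional subspaces of ${\cal H}$ such that, for every $N$ and every $f\in{\cal H}_0$, the Galerkin solution $u_N\in{\cal H}_N$ of $a_\ell(u_N,v_N)=(f,v_N)_{{\cal H}_0}$ for all $v_N\in{\cal H}_N$ exists, is unique, and satisfies $$\|u-u_N\|_{{\cal H}}\le C_{{\rm qo},\ell}\|(I-\Pi_N)u\|_{{\cal H}},$$ where $\Pi_N:{\cal H}\to{\cal H}_N$ is the ${\cal H}$-orthogonal projection and $u\in{\cal H}$ is the solution of $a_\ell(u,v)=(f,v)_{{\cal H}_0}$ for all $v\in{\cal H}$. Then for every $N$, $$\inf_{u_N\in{\cal H}_N\setminus\{0\}}\sup_{v_N\in{\cal H}_N\setminus\{0\}}\frac{|a_\ell(u_N,v_N)|}{\|u_N\|_{{\cal H}}\|v_N\|_{{\cal H}}}\ge\frac{1}{(C_{{\rm G1},\ell})^{-1}\Big(1+C_{{\rm G2},\ell}(1+C_{{\rm qo},\ell})\|{\mathcal A}_\ell^{-1}\|_{{\cal H}_0\to{\cal H}}\Big)}.$$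
   Context: Standing assumptions: ${\cal H}\subset{\cal H}_0$ are complex Hilbert spaces with $\|v\|_{{\cal H}_0}\le\|v\|_{{\cal H}}$ for $v\in{\cal H}$, and ${\cal H}_0$ is identified with its dual so that ${\cal H}\subset{\cal H}_0\subset{\cal H}^*$. ${\mathcal D}:{\cal H}\to{\cal H}_0$ is linear with $\|{\mathcal D}\|_{{\cal H}\to{\cal H}_0}\le 1$; $b(\cdot,\cdot)$ is a continuous sesquilinear form on ${\cal H}$; for $\ell=1,2$, $\mu_\ell^{-1}:{\cal H}_0\to{\cal H}_0$ and $\epsilon_\ell:{\cal H}_0\to{\cal H}_0$ are bounded linear operators, and $a_\ell(u,v):=(\mu_\ell^{-1}{\mathcal D}u,{\mathcal D}v)_{{\cal H}_0}+b(u,v)-(\epsilon_\ell u,v)_{{\cal H}_0}$. For $\ell=1,2$ there exist $C_{{\rm G1},\ell},C_{{\rm G2},\ell}>0$ with $|a_\ell(v,v)+C_{{\rm G2},\ell}\|v\|_{{\cal H}_0}^2|\ge C_{{\rm G1},\ell}\|v\|_{{\cal H}}^2$ for all $v\in{\cal H}$. ${\mathcal A}_\ell:{\cal H}\to{\cal H}^*$ is defined by $\langle{\mathcal A}_\ell u,v\rangle_{{\cal H}^*\times{\cal H}}=a_\ell(u,v)$, and $\|{\mathcal A}_\ell^{-1}\|_{{\cal H}_0\to{\cal H}}$ is the norm of the solution map $f\mapsto u$ from ${\cal H}_0$ to ${\cal H}$. *)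

From mathcomp Require Import all_boot all_algebra complex.
From mathcomp Require Import all_classical all_reals.
Set Implicit Arguments. Unset Strict Implicit. Unset Printing Implicit Defensive.
Import GRing.Theory Num.Theory.
Local Open Scope ring_scope.
Local Open Scope classical_set_scope.

Section HilbertDefs.
Context {R : realType} {V : lmodType R[i]}.

Definition cmod (z : R[i]) : R :=
  Num.sqrt (complex.Re z ^+ 2 + complex.Im z ^+ 2).

Definition subspace (P : V -> Prop) : Prop :=
  P 0 /\ forall (a : R[i]) u v, P u -> P v -> P (a *: u + v).

Definition is_inner_product (P : V -> Prop) (ip : V -> V -> R[i]) : Prop :=
  (forall (a : R[i]) u v w, P u -> P v -> P w ->
      ip (a *: u + v) w = a * ip u w + ip v w) /\
  (forall u v, P u -> P v -> ip v u = (ip u v)^*) /\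
  (forall u, P u -> 0 <= complex.Re (ip u u)) /\
  (forall u, P u -> ip u u = 0 -> u = 0).

Definition ipnorm (ip : V -> V -> R[i]) (u : V) : R :=
  Num.sqrt (complex.Re (ip u u)).

Definition complete_wrt (P : V -> Prop) (ip : V -> V -> R[i]) : Prop :=
  forall s : nat -> V, (forall n, P (s n)) ->
    (forall e : R, 0 < e -> exists N : nat, forall m n : nat,
        (N <= m)%N -> (N <= n)%N -> ipnorm ip (s m - s n) < e) ->
    exists l, P l /\ (forall e : R, 0 < e -> exists N : nat,
        forall n : nat, (N <= n)%N -> ipnorm ip (s n - l) < e).

Definition hilbert (P : V -> Prop) (ip : V -> V -> R[i]) : Prop :=
  subspace P /\ is_inner_product P ip /\ complete_wrt P ip.

Definition linear_on (P : V -> Prop) (f : V -> V) : Prop :=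
  forall (a : R[i]) u v, P u -> P v -> f (a *: u + v) = a *: f u + f v.

Definition sesquilinear_on (P : V -> Prop) (b : V -> V -> R[i]) : Prop :=
  (forall (a : R[i]) u v w, P u -> P v -> P w ->
      b (a *: u + v) w = a * b u w + b v w) /\
  (forall (a : R[i]) u v w, P u -> P v -> P w ->
      b u (a *: v + w) = a^* * b u v + b u w).

Definition finite_dim (P : V -> Prop) : Prop :=
  exists (n : nat) (e : 'I_n -> V),
    forall v, P v <-> exists c : 'I_n -> R[i], v = \sum_(i < n) c i *: e i.

Definition a_form (ip0 : V -> V -> R[i]) (muinv D eps : V -> V)
  (b : V -> V -> R[i]) (u v : V) : R[i] :=
  ip0 (muinv (D u)) (D v) + b u v - ip0 (eps u) v.

(* Standing assumptions of the context.  H0 is the whole space V with inner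
   product ip0; H is the subspace H of V with inner product ip. *)
Definition standing_assumptions (H : V -> Prop) (ip ip0 : V -> V -> R[i])
  (D muinv eps : V -> V) (b : V -> V -> R[i]) (CG1 CG2 : R) : Prop :=
  hilbert (fun _ => True) ip0 /\
      hilbert H ip /\
      (forall v, H v -> ipnorm ip0 v <= ipnorm ip v) /\
      linear_on H D /\ (forall v, H v -> ipnorm ip0 (D v) <= ipnorm ip v) /\
      sesquilinear_on H b /\ (exists Cb : R, forall u v, H u -> H v ->
           cmod (b u v) <= Cb * ipnorm ip u * ipnorm ip v) /\
      (linear_on (fun _ => True) muinv /\ exists K : R, forall v,
           ipnorm ip0 (muinv v) <= K * ipnorm ip0 v) /\
      (linear_on (fun _ => True) eps /\ exists K : R, forall v,
           ipnorm ip0 (eps v) <= K * ipnorm ip0 v) /\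
      0 < CG1 /\ 0 < CG2 /\
      (forall v, H v -> CG1 * ipnorm ip v ^+ 2 <=
         cmod (a_form ip0 muinv D eps b v v + Complex (CG2 * ipnorm ip0 v ^+ 2) 0)).

End HilbertDefs.

(* Given uN in H_N, solve the discrete adjoint problem a(w, y) = (w, uN)_H for
   all w in H_N; this finite-dimensional linear system is solvable because the
   Galerkin problem is uniquely solvable, and |a(uN, y)| = |uN|^2.  It remains
   to bound |y| by |uN|.  Let z be the Galerkin solution with data C_G2 y: then
   a(y + z, y) = a(y, y) + C_G2 |y|_0^2, so the Garding inequality gives
   C_G1 |y|^2 <= |(y + z, uN)_H| <= (|y| + |z|) |uN|, while quasi-optimality,
   |u - Pi_N u| <= |u| and the bound on the solution operator give
   |z| <= (1 + C_qo) |A^-1| C_G2 |y|.  Hence the ratio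
   |a(uN, y)| / (|uN| |y|) = |uN| / |y| is at least
   C_G1 / (1 + C_G2 (1 + C_qo) |A^-1|). *)

From mathcomp Require Import all_boot all_algebra complex.
From mathcomp Require Import all_classical all_reals.
From mathcomp Require Import ring lra.
Set Implicit Arguments. Unset Strict Implicit. Unset Printing Implicit Defensive.
Import order.Order.TTheory GRing.Theory Num.Theory.
Local Open Scope ring_scope.
Local Open Scope classical_set_scope.
Local Notation "x %:C" := (real_complex _ x) (format "x %:C") : ring_scope.

Lemma norm_cmod {R : realType} (z : R[i]) : `|z| = (cmod z)%:C.
Proof. exact: normc_def. Qed.

Section InnerProduct.
Context {R : realType} {V : lmodType R[i]}.
Variables (P : V -> Prop) (ip : V -> V -> R[i]).
Hypothesis subP : subspace P.

Lemma subspace0 : P 0. Proof. by case: subP. Qed.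

Lemma subspaceD u v : P u -> P v -> P (u + v).
Proof. by move=> Pu Pv; have := subP.2 1 u v Pu Pv; rewrite scale1r. Qed.

Lemma subspaceZ a u : P u -> P (a *: u).
Proof. by move=> Pu; have := subP.2 a u 0 Pu subspace0; rewrite addr0. Qed.

Lemma subspaceB u v : P u -> P v -> P (u - v).
Proof. by move=> Pu Pv; rewrite -scaleN1r; apply/subspaceD/subspaceZ. Qed.

Hypothesis ipP : is_inner_product P ip.

Lemma ip0l w : P w -> ip 0 w = 0.
Proof.
move=> Pw; have := ipP.1 1 0 0 w subspace0 subspace0 Pw.
rewrite scale1r addr0 mul1r => h.
by apply: (addrI (ip 0 w)); rewrite addr0 -h.
Qed.

Lemma ipDl u v w : P u -> P v -> P w -> ip (u + v) w = ip u w + ip v w.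
Proof. by move=> Pu Pv Pw; rewrite -[u in LHS]scale1r ipP.1 // mul1r. Qed.

Lemma ipZl a u w : P u -> P w -> ip (a *: u) w = a * ip u w.
Proof.
by move=> Pu Pw; rewrite -[_ *: _]addr0 ipP.1 ?ip0l ?addr0 //; apply: subspace0.
Qed.

Lemma ipBl u v w : P u -> P v -> P w -> ip (u - v) w = ip u w - ip v w.
Proof.
move=> Pu Pv Pw; rewrite -scaleN1r ipDl ?ipZl ?mulN1r //.
by rewrite -scaleN1r; apply: subspaceZ.
Qed.

Lemma ipC u v : P u -> P v -> ip v u = (ip u v)^*.
Proof. exact: ipP.2.1. Qed.

Lemma ipDr u v w : P u -> P v -> P w -> ip u (v + w) = ip u v + ip u w.
Proof.
move=> Pu Pv Pw; rewrite (ipC (subspaceD Pv Pw) Pu) ipDl // rmorphD.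
by rewrite (ipC Pv Pu) (ipC Pw Pu).
Qed.

Lemma ipZr a u v : P u -> P v -> ip u (a *: v) = a^* * ip u v.
Proof.
by move=> Pu Pv; rewrite (ipC (subspaceZ a Pv) Pu) ipZl // rmorphM (ipC Pv Pu).
Qed.

Lemma ipBr u v w : P u -> P v -> P w -> ip u (v - w) = ip u v - ip u w.
Proof.
move=> Pu Pv Pw; rewrite (ipC (subspaceB Pv Pw) Pu) ipBl // rmorphB.
by rewrite (ipC Pv Pu) (ipC Pw Pu).
Qed.

Lemma ip0r u : P u -> ip u 0 = 0.
Proof. by move=> Pu; rewrite (ipC subspace0 Pu) ip0l // rmorph0. Qed.

Lemma ip_selfE u : P u -> ip u u = (complex.Re (ip u u))%:C.
Proof.
move=> Pu; have := ipC Pu Pu; case: (ip u u) => x y /= [] /eqP.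
by rewrite -subr_eq0 opprK -mulr2n mulrn_eq0 /= => /eqP ->.
Qed.

Lemma ip_self_ge0 u : P u -> 0 <= ip u u.
Proof. by move=> Pu; rewrite ip_selfE // ler0c; apply: ipP.2.2.1. Qed.

Lemma ip_self_gt0 u : P u -> u <> 0 -> 0 < ip u u.
Proof.
move=> Pu u0; rewrite lt0r ip_self_ge0 // andbT; apply/eqP => uu0.
exact/u0/ipP.2.2.2.
Qed.

Lemma ipnorm_ge0 u : 0 <= ipnorm ip u.
Proof. exact: sqrtr_ge0. Qed.

Lemma ipnorm_sqrC u : P u -> (ipnorm ip u)%:C ^+ 2 = ip u u.
Proof.
move=> Pu; rewrite /ipnorm -rmorphXn /= sqr_sqrtr -?ip_selfE //.
exact: ipP.2.2.1.
Qed.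

Lemma cmod_ip_self u : P u -> cmod (ip u u) = ipnorm ip u ^+ 2.
Proof.
move=> Pu; apply/complexI; rewrite -norm_cmod -ipnorm_sqrC // rmorphXn /=.
by rewrite normrX ger0_norm // ler0c ipnorm_ge0.
Qed.

Lemma ipnorm_gt0 u : P u -> u <> 0 -> 0 < ipnorm ip u.
Proof.
move=> Pu u0; rewrite lt0r ipnorm_ge0 andbT; apply/eqP => nu0.
by apply/u0/ipP.2.2.2; rewrite // -ipnorm_sqrC // nu0 expr0n.
Qed.

Lemma cauchy_schwarz u v : P u -> P v -> `|ip u v| ^+ 2 <= ip u u * ip v v.
Proof.
move=> Pu Pv; have [->|/eqP v0] := eqVneq v 0.
  by rewrite ip0r // ip0l ?normr0 ?expr0n ?mulr0 //; apply: subspace0.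
have vv_gt0 := ip_self_gt0 Pv v0.
have vv_neq0 : ip v v != 0 by rewrite gt_eqF.
have vv_real : (ip v v)^* = ip v v by rewrite -ipC.
(* Expand 0 <= (u - t v, u - t v) at the minimiser t = (u, v) / (v, v). *)
pose t := ip u v / ip v v.
have Ptv := subspaceZ t Pv.
have := ip_self_ge0 (subspaceB Pu Ptv).
rewrite ipBl ?ipBr ?ipZl ?ipZr //; try exact: subspaceB.
have tc : t^* = (ip u v)^* / ip v v.
  by rewrite /t rmorphM fmorphV; congr (_ * _^-1).
rewrite tc -(ipC Pu Pv) /t => h.
rewrite normCK -ler_pdivrMr // -subr_ge0 -(ipC Pu Pv); apply: le_trans h _.
by rewrite le_eqVlt; apply/orP; left; apply/eqP; field.
Qed.

Lemma cmod_ip_le u v : P u -> P v -> cmod (ip u v) <= ipnorm ip u * ipnorm ip v.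
Proof.
move=> Pu Pv; rewrite -lecR -norm_cmod.
rewrite -(@ler_pXn2r _ 2) ?nnegrE ?normr_ge0 ?ler0c ?mulr_ge0 ?ipnorm_ge0 //.
by rewrite rmorphM exprMn !ipnorm_sqrC //; apply: cauchy_schwarz.
Qed.

Lemma ipnormD_le u v : P u -> P v ->
  ipnorm ip (u + v) <= ipnorm ip u + ipnorm ip v.
Proof.
move=> Pu Pv; have Puv := subspaceD Pu Pv.
rewrite -lecR -(@ler_pXn2r _ 2) ?nnegrE ?ler0c ?addr_ge0 ?ipnorm_ge0 //.
rewrite ipnorm_sqrC // rmorphD sqrrD !ipnorm_sqrC // ipDl ?ipDr //.
rewrite (ipC Pu Pv) -!addrA lerD2l !addrA lerD2r.
have uv_real : ip u v + (ip u v)^* \is Num.real.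
  by rewrite CrealE rmorphD /= conjCK addrC.
apply: le_trans (real_ler_norm uv_real) _.
apply: le_trans (ler_normD _ _) _.
have uv_le : `|ip u v| <= (ipnorm ip u)%:C * (ipnorm ip v)%:C.
  by rewrite -rmorphM norm_cmod lecR cmod_ip_le.
by rewrite norm_conjC; apply: lerD.
Qed.

Lemma ipnorm_distC u v : P u -> P v -> ipnorm ip (u - v) = ipnorm ip (v - u).
Proof.
move=> Pu Pv; have Pvu := subspaceB Pv Pu.
rewrite /ipnorm -opprB -[- (v - u)]scaleN1r.
rewrite ipZl ?ipZr ?rmorphN1 ?mulN1r ?opprK //.
exact: subspaceZ.
Qed.

Lemma ipnormZ k u : P u -> 0 <= k -> ipnorm ip (k%:C *: u) = k * ipnorm ip u.
Proof.
move=> Pu k_ge0; have kC : (k%:C)^* = k%:C := conjc_real k.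
rewrite /ipnorm ipZl ?ipZr ?kC //; last exact: subspaceZ.
rewrite (ip_selfE Pu) -!rmorphM /= mulrA -expr2 sqrtrM ?sqr_ge0 //.
by rewrite sqrtr_sqr ger0_norm.
Qed.

Lemma ipnorm_orth_le u p : P u -> P p -> ip (u - p) p = 0 ->
  ipnorm ip (u - p) <= ipnorm ip u.
Proof.
move=> Pu Pp orth; have Pw := subspaceB Pu Pp.
rewrite -lecR -(@ler_pXn2r _ 2) ?nnegrE ?ler0c ?ipnorm_ge0 // !ipnorm_sqrC //.
have -> : ip u u = ip (u - p + p) (u - p + p) by rewrite subrK.
move: (u - p) Pw orth => w Pw orth.
rewrite ipDl ?ipDr //; try exact: subspaceD.
by rewrite orth (ipC Pw Pp) orth conjC0 addr0 add0r lerDl ip_self_ge0.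
Qed.

End InnerProduct.

Lemma mx_solvable_left_ker (F : fieldType) m n (B : 'M[F]_(m, n)) (g : 'cV_m) :
  (forall c : 'rV_m, c *m B = 0 -> c *m g = 0) -> exists d : 'cV_n, g = B *m d.
Proof.
move=> g_compat.
(* [cokermx B^T] spans the right kernel of [B^T], i.e. the left kernel of [B]. *)
have /submxP [d gE] : (g^T <= B^T)%MS.
  rewrite submxE; apply/eqP/trmx_inj; rewrite trmx_mul trmxK trmx0.
  apply/row_matrixP => i; rewrite row_mul row0; apply: g_compat.
  rewrite -row_mul.
  have -> : (cokermx B^T)^T *m B = (B^T *m cokermx B^T)^T.
    by rewrite [RHS]trmx_mul trmxK.
  by rewrite mulmx_coker trmx0 row0.
by exists d^T; apply: trmx_inj; rewrite trmx_mul trmxK.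
Qed.

Section FiniteSums.
Context {R : realType} {V : lmodType R[i]}.
Variable P : V -> Prop.
Hypothesis subP : subspace P.

Lemma linear_on_sum (f : V -> R[i]) m (q : 'I_m -> V) (c : 'I_m -> R[i]) :
  (forall a u v, P u -> P v -> f (a *: u + v) = a * f u + f v) ->
  (forall i, P (q i)) -> f (\sum_i c i *: q i) = \sum_i c i * f (q i).
Proof.
move=> f_lin Pq; have f0 : f 0 = 0.
  have := f_lin 1 0 0 (subspace0 subP) (subspace0 subP).
  rewrite scale1r addr0 mul1r => h.
  by apply: (addrI (f 0)); rewrite addr0 -h.
pose K x y := P x /\ f x = y.
suff [] : K (\sum_i c i *: q i) (\sum_i c i * f (q i)) by [].
apply: (big_rec2 K); first by split; [exact: subspace0 | exact: f0].
by move=> i x y _ [Px <-]; split; [exact: subP.2 | exact: f_lin].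
Qed.

Lemma antilinear_on_sum (f : V -> R[i]) m (q : 'I_m -> V) (c : 'I_m -> R[i]) :
  (forall a u v, P u -> P v -> f (a *: u + v) = a^* * f u + f v) ->
  (forall i, P (q i)) -> f (\sum_i c i *: q i) = \sum_i (c i)^* * f (q i).
Proof.
move=> f_alin Pq; apply: (can_inj conjCK); rewrite rmorph_sum /=.
rewrite (@linear_on_sum (fun x => (f x)^*)) => [|a u v Pu Pv /=|] //.
  by apply: eq_bigr => i _; rewrite rmorphM /= conjCK.
by rewrite f_alin // rmorphD rmorphM /= conjCK.
Qed.

End FiniteSums.

Section FiniteDimAdjoint.
Context {R : realType} {V : lmodType R[i]}.
Variables (P : V -> Prop) (a : V -> V -> R[i]) (l : V -> R[i]).
Hypotheses (subP : subspace P) (finP : finite_dim P).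
Hypothesis a_sesq : sesquilinear_on P a.
Hypothesis l_lin : forall al u v, P u -> P v -> l (al *: u + v) = al * l u + l v.
Hypothesis l_compat : forall z, P z -> (forall w, P w -> a z w = 0) -> l z = 0.

Lemma adjoint_solvable : exists y, P y /\ forall w, P w -> a w y = l w.
Proof.
have [n [e Pe]] := finP.
have Pe_k k : P (e k).
  apply/Pe; exists (fun j => (j == k)%:R).
  rewrite (bigD1 k) //= eqxx scale1r big1 ?addr0 // => j /negbTE ->.
  by rewrite scale0r.
have a_suml w c : P w -> a (\sum_k c k *: e k) w = \sum_k c k * a (e k) w.
  move=> Pw; apply: (linear_on_sum subP (f := a^~ w)) => // al u v Pu Pv.
  exact: a_sesq.1.
have a_sumr u c : P u -> a u (\sum_k c k *: e k) = \sum_k (c k)^* * a u (e k).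
  move=> Pu; apply: (antilinear_on_sum subP (f := a u)) => // al v w Pv Pw.
  exact: a_sesq.2.
have l_sum c : l (\sum_k c k *: e k) = \sum_k c k * l (e k).
  exact: (linear_on_sum subP).
pose B := \matrix_(k, j) a (e k) (e j).
(* [c *m B = 0] says that [\sum_k c k *: e k] is in the left kernel of [a]. *)
have [d gE] : exists d, \col_k l (e k) = B *m d.
  apply: mx_solvable_left_ker => c cB; apply/rowP => i; rewrite ord1 !mxE.
  under eq_bigr do rewrite mxE.
  rewrite -l_sum; apply: l_compat => [|w /Pe [c' ->]].
    by apply/Pe; exists (c 0).
  rewrite a_sumr; last by apply/Pe; exists (c 0).
  apply: big1 => j _; rewrite a_suml //.
  have cBj : \sum_k c 0 k * a (e k) (e j) = 0.
    have := congr1 (fun X : 'rV_n => X 0 j) cB; rewrite !mxE => cB0j.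
    by rewrite -[RHS]cB0j; apply: eq_bigr => k _; rewrite mxE.
  by rewrite cBj mulr0.
pose y := \sum_j (d j 0)^* *: e j.
have Py : P y by apply/Pe; exists (fun j => (d j 0)^*).
exists y; split => // w /Pe [c ->]; rewrite a_suml // l_sum.
apply: eq_bigr => k _; congr (_ * _); rewrite a_sumr //.
have := congr1 (fun X : 'cV_n => X k 0) gE; rewrite !mxE => ->.
by apply: eq_bigr => j _; rewrite conjCK mxE mulrC.
Qed.

End FiniteDimAdjoint.

Section Sesquilinear.
Context {R : realType} {V : lmodType R[i]}.
Variables (P : V -> Prop) (a : V -> V -> R[i]).
Hypotheses (subP : subspace P) (a_sesq : sesquilinear_on P a).

Lemma sesquilinear0l w : P w -> a 0 w = 0.
Proof.
move=> Pw; have := a_sesq.1 (-1) 0 0 w (subspace0 subP) (subspace0 subP) Pw.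
by rewrite scaler0 addr0 mulN1r addNr.
Qed.

Lemma sesquilinear0r u : P u -> a u 0 = 0.
Proof.
move=> Pu; have := a_sesq.2 (-1) u 0 0 Pu (subspace0 subP) (subspace0 subP).
by rewrite scaler0 addr0 rmorphN1 mulN1r addNr.
Qed.

Lemma sesquilinear_on_sub (Q : V -> Prop) :
  (forall v, Q v -> P v) -> sesquilinear_on Q a.
Proof.
by move=> QP; split=> al u v w Qu Qv Qw; [apply: a_sesq.1 | apply: a_sesq.2];
  apply: QP.
Qed.

End Sesquilinear.

Lemma cmodDB_le {R : realType} (x y z : R[i]) :
  cmod (x + y - z) <= cmod x + cmod y + cmod z.
Proof.
rewrite -lecR !rmorphD /= -!norm_cmod.
by apply: le_trans (ler_normB _ _) _; rewrite lerD2r ler_normD.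
Qed.

Lemma a_form_sesquilinear {R : realType} {V : lmodType R[i]} (H : V -> Prop)
    (ip0 : V -> V -> R[i]) (D muinv eps : V -> V) (b : V -> V -> R[i]) :
  is_inner_product (fun _ => True) ip0 -> linear_on H D ->
  linear_on (fun _ => True) muinv -> linear_on (fun _ => True) eps ->
  sesquilinear_on H b -> sesquilinear_on H (a_form ip0 muinv D eps b).
Proof.
move=> ip0P D_lin mu_lin eps_lin b_sesq.
have subT : subspace (fun _ : V => True) by split.
split=> al u v w Hu Hv Hw; rewrite /a_form.
  rewrite D_lin // mu_lin // eps_lin // b_sesq.1 // !ip0P.1 //; ring.
rewrite D_lin // b_sesq.2 // !(ipDr subT ip0P, ipZr subT ip0P) //; ring.
Qed.

Section GalerkinInfSup.
Context {R : realType} {V : lmodType R[i]}.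
Variables (H : V -> Prop) (ip ip0 : V -> V -> R[i]) (D muinv eps : V -> V).
Variables (b : V -> V -> R[i]) (CG1 CG2 : R).
Hypothesis std : standing_assumptions H ip ip0 D muinv eps b CG1 CG2.

Local Notation a := (a_form ip0 muinv D eps b).
Local Notation nrm := (ipnorm ip).
Local Notation nrm0 := (ipnorm ip0).

Let subT : subspace (fun _ : V => True). Proof. by split. Qed.
Let ip0P : is_inner_product (fun _ => True) ip0.
Proof. by case: std => -[_ []]. Qed.
Let subH : subspace H. Proof. by case: std => _ [[]]. Qed.
Let ipP : is_inner_product H ip. Proof. by case: std => _ [[_ []]]. Qed.
Let nrm0_le v : H v -> nrm0 v <= nrm v.
Proof. by case: std => _ [_ [le_nrm _]]; apply: le_nrm. Qed.
Let CG1_gt0 : 0 < CG1.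
Proof. by case: std => _ [_ [_ [_ [_ [_ [_ [_ [_ []]]]]]]]]. Qed.
Let CG2_gt0 : 0 < CG2.
Proof. by case: std => _ [_ [_ [_ [_ [_ [_ [_ [_ [_ []]]]]]]]]]. Qed.
Let garding v : H v ->
  CG1 * nrm v ^+ 2 <= cmod (a v v + (CG2 * nrm0 v ^+ 2)%:C).
Proof.
by case: std => _ [_ [_ [_ [_ [_ [_ [_ [_ [_ [_ coercive]]]]]]]]]]; apply: coercive.
Qed.

Lemma a_sesquilinear : sesquilinear_on H a.
Proof.
case: std => _ [_ [_ [D_lin [_ [b_sesq [_ [[mu_lin _] [[eps_lin _] _]]]]]]]].
exact: a_form_sesquilinear.
Qed.

Lemma a_bounded :
  exists C, forall u v, H u -> H v -> cmod (a u v) <= C * nrm u * nrm v.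
Proof.
case: std => _ [_ [_ [_ [D_le [_ [[Cb b_le] [[_ [K1 mu_le]] [[_ [K2 eps_le]] _]]]]]]]].
have op_le (K : R) (op : V -> V) : (forall v, nrm0 (op v) <= K * nrm0 v) ->
    forall v, nrm0 (op v) <= Num.max K 0 * nrm0 v.
  move=> op_le v; apply: le_trans (op_le v) _.
  by apply: ler_wpM2r; rewrite ?ipnorm_ge0 ?le_max ?lexx.
have maxK_ge0 (K : R) : 0 <= Num.max K 0 by rewrite le_max lexx orbT.
exists (Num.max K1 0 + Cb + Num.max K2 0) => u v Hu Hv.
apply: le_trans (cmodDB_le _ _ _) _; rewrite !mulrDl.
apply: lerD; first apply: lerD.
- apply: le_trans (cmod_ip_le subT ip0P _ _) _ => //.
  apply: ler_pM; rewrite ?ipnorm_ge0 ?D_le //.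
  apply: le_trans (op_le _ _ mu_le _) _.
  by apply: ler_wpM2l; rewrite ?D_le.
- exact: b_le.
- apply: le_trans (cmod_ip_le subT ip0P _ _) _ => //.
  apply: ler_pM; rewrite ?ipnorm_ge0 ?nrm0_le //.
  apply: le_trans (op_le _ _ eps_le _) _.
  by apply: ler_wpM2l; rewrite ?nrm0_le.
Qed.

Variables (P : V -> Prop) (Pi : V -> V) (Cqo M : R).
Hypotheses (subP : subspace P) (PH : forall v, P v -> H v) (finP : finite_dim P).
Hypothesis Pi_orth :
  forall u, H u -> P (Pi u) /\ forall v, P v -> ip (u - Pi u) v = 0.
Hypothesis cont_solvable :
  forall f, exists u, H u /\ forall v, H v -> a u v = ip0 f v.
Hypothesis M_ge0 : 0 <= M.
Hypothesis sol_le : forall f u, H u -> (forall v, H v -> a u v = ip0 f v) ->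
  nrm u <= M * nrm0 f.
Hypothesis Cqo_ge0 : 0 <= Cqo.
Hypothesis galerkin_wellposed : forall f, exists uN, P uN /\
  (forall vN, P vN -> a uN vN = ip0 f vN) /\
  forall uN', P uN' -> (forall vN, P vN -> a uN' vN = ip0 f vN) -> uN' = uN.
Hypothesis quasi_optimal : forall f u uN,
  H u -> (forall v, H v -> a u v = ip0 f v) ->
  P uN -> (forall vN, P vN -> a uN vN = ip0 f vN) ->
  nrm (u - uN) <= Cqo * nrm (u - Pi u).

Lemma galerkin_norm_le f z : P z -> (forall w, P w -> a z w = ip0 f w) ->
  nrm z <= (1 + Cqo) * M * nrm0 f.
Proof.
move=> Pz zf; have Hz := PH Pz; have [u [Hu uf]] := cont_solvable f.
have [PPi orth] := Pi_orth Hu.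
have best_le : nrm (u - Pi u) <= nrm u.
  exact: (ipnorm_orth_le subH ipP Hu (PH PPi) (orth _ PPi)).
have z_le : nrm z <= nrm u + nrm (u - z).
  have := ipnormD_le subH ipP Hu (subspaceB subH Hz Hu).
  by rewrite addrC subrK (ipnorm_distC subH ipP Hz Hu).
have u_le := sol_le Hu uf.
apply: le_trans z_le _; rewrite -mulrA mulrDl mul1r; apply: lerD => //.
apply: le_trans (quasi_optimal Hu uf Pz zf) _.
by apply: ler_wpM2l => //; apply: le_trans best_le u_le.
Qed.

Lemma garding_shift y : P y -> exists z, P z /\
  nrm z <= CG2 * (1 + Cqo) * M * nrm y /\ CG1 * nrm y ^+ 2 <= cmod (a (y + z) y).
Proof.
move=> Py; have Hy := PH Py.
(* The Galerkin solution for the data [CG2 y] satisfies [a z y = CG2 |y|_0^2]. *)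
have [z [Pz [zf _]]] := galerkin_wellposed (CG2%:C *: y).
exists z; split=> //; split.
  apply: le_trans (galerkin_norm_le Pz zf) _.
  rewrite (ipnormZ subT ip0P I (ltW CG2_gt0)) mulrCA !mulrA.
  apply: ler_wpM2l; last exact: nrm0_le.
  by rewrite !mulr_ge0 ?addr_ge0 // ltW.
have -> : a (y + z) y = a y y + (CG2 * nrm0 y ^+ 2)%:C.
  have := a_sesquilinear.1 1 y z y Hy (PH Pz) Hy; rewrite scale1r mul1r => ->.
  rewrite zf // (ipZl subT ip0P) // rmorphM rmorphXn (ipnorm_sqrC ip0P) //.
exact: garding.
Qed.

Lemma adjoint_norm_le y uN : P y -> P uN -> (forall w, P w -> a w y = ip w uN) ->
  CG1 * nrm y <= (1 + CG2 * (1 + Cqo) * M) * nrm uN.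
Proof.
move=> Py PuN ay; have [Hy HuN] := (PH Py, PH PuN).
have [z [Pz [z_le coercive]]] := garding_shift Py.
have Pyz := subspaceD subP Py Pz; have Hyz := PH Pyz.
have sq_le : CG1 * nrm y ^+ 2 <= (1 + CG2 * (1 + Cqo) * M) * nrm y * nrm uN.
  apply: le_trans coercive _; rewrite ay //.
  apply: le_trans (cmod_ip_le subH ipP Hyz HuN) _.
  apply: ler_wpM2r; first exact: ipnorm_ge0.
  apply: le_trans (ipnormD_le subH ipP Hy (PH Pz)) _.
  by rewrite mulrDl mul1r lerD2l.
have K_ge0 : 0 <= 1 + CG2 * (1 + Cqo) * M.
  by rewrite addr_ge0 // !mulr_ge0 ?addr_ge0 // ltW.
have := ipnorm_ge0 ip y; rewrite le_eqVlt => /orP [/eqP ny0 | ny_gt0].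
  by rewrite -ny0 mulr0 mulr_ge0 ?ipnorm_ge0.
have := ipnorm_ge0 ip uN; nra.
Qed.

Lemma galerkin_adjoint_solvable uN : P uN ->
  exists y, P y /\ forall w, P w -> a w y = ip w uN.
Proof.
move=> PuN; have a_sesqP := sesquilinear_on_sub a_sesquilinear PH.
apply: adjoint_solvable => // [al u v Pu Pv | z Pz az0].
  exact: ipP.1 (PH Pu) (PH Pv) (PH PuN).
have [z0 [_ [_ z0_uniq]]] := galerkin_wellposed 0.
have az w : P w -> a z w = ip0 0 w.
  by move=> Pw; rewrite az0 // (ip0l subT ip0P).
have a0 w : P w -> a 0 w = ip0 0 w.
  by move=> Pw; rewrite (ip0l subT ip0P) // (sesquilinear0l subP a_sesqP).
rewrite (z0_uniq z Pz az) -(z0_uniq 0 (subspace0 subP) a0).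
exact: (ip0l subH ipP (PH PuN)).
Qed.

Lemma galerkin_inf_sup_ge uN : P uN -> uN <> 0 ->
  1 / (CG1^-1 * (1 + CG2 * (1 + Cqo) * M)) <=
  sup [set cmod (a uN vN) / (nrm uN * nrm vN) | vN in [set vN | P vN /\ vN <> 0]].
Proof.
move=> PuN uN0; have HuN := PH PuN.
have nuN_gt0 := ipnorm_gt0 ipP HuN uN0.
have [y [Py ay]] := galerkin_adjoint_solvable PuN.
have y0 : y <> 0.
  move=> y0; apply/uN0/(ipP.2.2.2 _ HuN).
  by rewrite -ay // y0 (sesquilinear0r subH a_sesquilinear).
have [C a_le] := a_bounded.
set S := [set _ | _ in _].
have S_ub : has_ubound S.
  exists C => _ [v [Pv v0] <-].
  have nv_gt0 := ipnorm_gt0 ipP (PH Pv) v0.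
  rewrite ler_pdivrMr ?mulr_gt0 //.
  by rewrite mulrA; apply: a_le (PH Pv).
apply: le_trans (ub_le_sup S_ub (ex_intro2 _ _ y (conj Py y0) erefl)).
(* The test function [y] realises the ratio [|uN| / |y|]. *)
rewrite ay // (cmod_ip_self ipP HuN).
have ny_gt0 := ipnorm_gt0 ipP (PH Py) y0.
have K_gt0 : 0 < 1 + CG2 * (1 + Cqo) * M.
  by apply: (lt_le_trans ltr01); rewrite lerDl !mulr_ge0 ?addr_ge0 // ltW.
have -> : nrm uN ^+ 2 / (nrm uN * nrm y) = nrm uN / nrm y.
  by field; rewrite !gt_eqF.
have -> : 1 / (CG1^-1 * (1 + CG2 * (1 + Cqo) * M)) =
          CG1 / (1 + CG2 * (1 + Cqo) * M).
  by field; rewrite !gt_eqF.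
rewrite ler_pdivrMr // mulrAC ler_pdivlMr // [X in _ <= X]mulrC.
exact: adjoint_norm_le Py PuN ay.
Qed.

End GalerkinInfSup.

Theorem corollary4p9 (R : realType) (V : lmodType R[i])
  (H : V -> Prop) (ip ip0 : V -> V -> R[i]) (D muinv eps : V -> V)
  (b : V -> V -> R[i]) (CG1 CG2 Cqo M : R)
  (HN : nat -> V -> Prop) (Pi : nat -> V -> V) :
  standing_assumptions H ip ip0 D muinv eps b CG1 CG2 ->
  let a := a_form ip0 muinv D eps b in
  (* the continuous problem is uniquely solvable for every f in H0 *)
  (forall f, exists u, H u /\ (forall v, H v -> a u v = ip0 f v) /\
     forall u', H u' -> (forall v, H v -> a u' v = ip0 f v) -> u' = u) ->
  (* M is a bound for the norm of the solution operator H0 -> H *)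
  0 <= M ->
  (forall f u, H u -> (forall v, H v -> a u v = ip0 f v) ->
     ipnorm ip u <= M * ipnorm ip0 f) ->
  0 < Cqo ->
  (* finite-dimensional subspaces of H *)
  (forall N, subspace (HN N) /\ (forall v, HN N v -> H v) /\ finite_dim (HN N)) ->
  (* Pi N is the H-orthogonal projection onto HN N *)
  (forall N u, H u -> HN N (Pi N u) /\
     forall v, HN N v -> ip (u - Pi N u) v = 0) ->
  (* the Galerkin solutions exist and are unique *)
  (forall N f, exists uN, HN N uN /\ (forall vN, HN N vN -> a uN vN = ip0 f vN) /\
     forall uN', HN N uN' -> (forall vN, HN N vN -> a uN' vN = ip0 f vN) -> uN' = uN) ->
  (* quasi-optimality *)
  (forall N f u uN, H u -> (forall v, H v -> a u v = ip0 f v) ->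
     HN N uN -> (forall vN, HN N vN -> a uN vN = ip0 f vN) ->
     ipnorm ip (u - uN) <= Cqo * ipnorm ip (u - Pi N u)) ->
  (* discrete inf-sup bound: every element of the inf is >= the bound *)
  forall N uN, HN N uN -> uN <> 0 ->
    1 / (CG1^-1 * (1 + CG2 * (1 + Cqo) * M)) <=
    sup [set cmod (a uN vN) / (ipnorm ip uN * ipnorm ip vN)
         | vN in [set vN | HN N vN /\ vN <> 0]].
Proof.
move=> std a cont_wellposed M_ge0 sol_le Cqo_gt0 HN_fin Pi_orth galerkin_wellposed
  quasi_optimal N.
have [subN [NH finN]] := HN_fin N.
have cont_solvable f : exists u, H u /\ forall v, H v -> a u v = ip0 f v.
  by have [u [Hu [uf _]]] := cont_wellposed f; exists u.
exact: (galerkin_inf_sup_ge std subN NH finN (Pi_orth N) cont_solvable M_ge0 sol_le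
  (ltW Cqo_gt0) (galerkin_wellposed N) (quasi_optimal N)).
Qed.
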